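(* Let $G$ be a graph, $\mathcal{C}=\{1,\dots,q\}$ a set of colors, $\lambda:E(G)\to 2^{\mathcal{C}}\setminus\{\emptyset\}$, and $\gamma:\{(e,c)\mid e\in E(G),c\in\lambda(e)\}\to\mathbb{Q}_{\ge 0}$. Construct $G'$ as follows: for each $c\in\mathcal{C}$ let $G_c$ be a copy of $G$ with vertex set $V(G_c)=\{v_c\mid v\in V(G)\}$ containing exactly the edges $\{v_c,w_c\}$ with $\{v,w\}\in E(G)$ and $c\in\lambda(\{v,w\})$, of weight $\gamma'(\{v_c,w_c\})=\gamma(\{v,w\},c)$; for each $v\in V(G)$ add an independent set $J(v)$ of $q-1$ new vertices and all edges $\{v_c,x\}$ for $c\in\mathcal{C}$, $x\in J(v)$, each of weight $0$. Let $J=\bigcup_{v\in V(G)}J(v)$, partition $V(G')$ as $V(G_1)\uplus\dots\uplus V(G_q)\uplus J$, and let $H'$ be the graph with vertex set $\{V(G_1),\dots,V(G_q),J\}$ whose edges are exactly one self-loop $\{V(G_c),V(G_c)\}$ for each $c\in\mathcal{C}$. Then for every $\ell$, $G$ has a perfect over-the-rainbow matching of weight $\ell$ if and only if $G'$ has a perfect conjoining matching (with respect to $H'$ and this partition) of weight $\ell$.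
   Context: A perfect over-the-rainbow matching of $G$ is a pair $(M,\xi)$ where $M$ is a perfect matching of $G$ and $\xi:M\to\mathcal{C}$ is surjective with $\xi(e)\in\lambda(e)$ for all $e\in M$; its weight is $\sum_{e\in M}\gamma(e,\xi(e))$. Given a graph $G'$ with edge weights, a partition $V(G')=V_1\uplus\dots\uplus V_t$, and a graph $H'$ (possibly with self-loops) on vertex set $\{V_1,\dots,V_t\}$, a perfect conjoining matching is a perfect matching $M'$ of $G'$ such that for every edge $\{V_i,V_j\}\in E(H')$ (with $i=j$ for a self-loop) there is an edge $\{u,v\}\in M'$ with $u\in V_i$ and $v\in V_j$; its weight is the sum of the weights of its edges. *)

From mathcomp Require Import all_boot all_order all_algebra.
Set Implicit Arguments. Unset Strict Implicit. Unset Printing Implicit Defensive.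
Import Order.TTheory GRing.Theory Num.Theory.
Local Open Scope ring_scope.

Definition simple_edges (V : finType) (E : {set {set V}}) : bool :=
  [forall e in E, #|e| == 2%N].

Definition perfect_matching (V : finType) (E M : {set {set V}}) : bool :=
  (M \subset E) && [forall v : V, #|[set f in M | v \in f]| == 1%N].

Definition over_the_rainbow (V : finType) (q : nat) (E : {set {set V}})
    (lam : {set V} -> {set 'I_q}) (M : {set {set V}}) (xi : {set V} -> 'I_q) : Prop :=
  perfect_matching E M /\
  (forall e, e \in M -> xi e \in lam e) /\
  (forall c : 'I_q, exists2 e, e \in M & xi e = c).

Definition otr_weight (V : finType) (q : nat) (gam : {set V} -> 'I_q -> rat)
    (M : {set {set V}}) (xi : {set V} -> 'I_q) : rat :=
  \sum_(e in M) gam e (xi e).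

(* Perfect conjoining matching of (V', E') w.r.t. a partition of V' given by
   part : V' -> P (the block containing a vertex) and a graph H' on the blocks
   whose edges are given as pairs (i, j) (i = j for a self-loop). *)
Definition conjoining (V' P : finType) (E' M : {set {set V'}})
    (part : V' -> P) (H : {set P * P}) : bool :=
  perfect_matching E' M &&
  [forall ij in H, [exists f in M, exists u, exists v,
     [&& u \in f, v \in f, u != v, part u == ij.1 & part v == ij.2]]].

Definition set_weight (V' : finType) (w : {set V'} -> rat) (M : {set {set V'}}) : rat :=
  \sum_(f in M) w f.

(* The construction of G'.  Vertices: inl (v, c) is v_c in G_c;
   inr (v, j) (j < q - 1) are the q - 1 vertices of J(v). *)
Definition Vp (V : finType) (q : nat) : finType := ((V * 'I_q) + (V * 'I_q.-1))%type.

Definition copy_edge (V : finType) (q : nat) (e : {set V}) (c : 'I_q) : {set Vp V q} :=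
  [set inl (x, c) | x in e].

Definition Ep (V : finType) (q : nat) (E : {set {set V}}) (lam : {set V} -> {set 'I_q})
    : {set {set Vp V q}} :=
  [set f : {set Vp V q} | [exists e in E, exists c : 'I_q,
       (c \in lam e) && (f == copy_edge e c)]]
  :|: [set f : {set Vp V q} | [exists v : V, exists c : 'I_q, exists j : 'I_q.-1,
       f == [set inl (v, c); inr (v, j)]]].

(* gamma'({v_c, w_c}) = gamma({v,w}, c); edges incident to J get weight 0. *)
Definition gamp (V : finType) (q : nat) (E : {set {set V}}) (lam : {set V} -> {set 'I_q})
    (gam : {set V} -> 'I_q -> rat) (f : {set Vp V q}) : rat :=
  match [pick ec : {set V} * 'I_q |
           [&& ec.1 \in E, ec.2 \in lam ec.1 & f == copy_edge ec.1 ec.2]] with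
  | Some ec => gam ec.1 ec.2
  | None => 0
  end.

(* Partition of V(G'): block Some c is V(G_c), block None is J. *)
Definition partp (V : finType) (q : nat) (x : Vp V q) : option 'I_q :=
  match x with inl (_, c) => Some c | inr _ => None end.

Definition Hp (q : nat) : {set option 'I_q * option 'I_q} :=
  [set (Some c, Some c) | c : 'I_q].

From mathcomp Require Import all_boot all_order all_algebra.
Set Implicit Arguments. Unset Strict Implicit. Unset Printing Implicit Defensive.
Import Order.TTheory GRing.Theory Num.Theory.
Local Open Scope ring_scope.

(* A rainbow matching (M, xi) lifts to G' by copying each edge e into the layer
   G_(xi e); at a vertex v only the copy v_c with c the colour of the edge at v
   is then used, and the q - 1 other copies are matched bijectively to J(v).
   Conversely, in a perfect matching of G' the q - 1 vertices of J(v) use up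
   q - 1 distinct copies of v, so exactly one copy of v is matched inside a
   layer; projecting the layer edges back to G gives a perfect matching whose
   colouring is read off the layers, and the self-loops of H' make every colour
   occur.  Edges at J have weight 0, so the weights agree. *)

Section PerfectMatching.
Variables (T : finType) (E M : {set {set T}}).

Lemma perfect_matching_sub : perfect_matching E M -> M \subset E.
Proof. by case/andP. Qed.

Lemma perfect_matching_cover x :
  perfect_matching E M -> exists2 f, f \in M & x \in f.
Proof.
case/andP=> _ /forallP/(_ x)/cards1P[f0 Mx].
by have := set11 f0; rewrite -Mx inE => /andP[]; exists f0.
Qed.

Lemma perfect_matching_eq x f1 f2 : perfect_matching E M ->
  f1 \in M -> f2 \in M -> x \in f1 -> x \in f2 -> f1 = f2.
Proof.
case/andP=> _ /forallP/(_ x)/cards1P[f0 Mx] f1M f2M xf1 xf2.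
have : f1 \in [set f in M | x \in f] by rewrite inE f1M xf1.
have : f2 \in [set f in M | x \in f] by rewrite inE f2M xf2.
by rewrite Mx !inE => /eqP-> /eqP->.
Qed.

Lemma perfect_matchingI : M \subset E ->
  (forall x, exists2 f, f \in M & x \in f) ->
  (forall x f1 f2, f1 \in M -> f2 \in M -> x \in f1 -> x \in f2 -> f1 = f2) ->
  perfect_matching E M.
Proof.
move=> sME cover disj; rewrite /perfect_matching sME; apply/forallP=> x.
have [f0 f0M xf0] := cover x; apply/cards1P; exists f0; apply/setP=> f.
rewrite !inE; apply/andP/eqP=> [[fM xf]|->//]; exact: disj xf xf0.
Qed.

Lemma perfect_matching_vertex_fun (R : Type) (h : {set T} -> R) :
  perfect_matching E M ->
  exists g : T -> R, forall x f, f \in M -> x \in f -> g x = h f.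
Proof.
move=> PM; suff /fin_all_exists[g gh] : forall x, exists r : R,
    forall f, f \in M -> x \in f -> r = h f by exists g.
move=> x; have [f0 f0M xf0] := perfect_matching_cover x PM.
by exists (h f0) => f fM xf; rewrite (perfect_matching_eq PM fM f0M xf xf0).
Qed.

End PerfectMatching.

Lemma simple_edge_neq0 (V : finType) (E : {set {set V}}) e :
  simple_edges E -> e \in E -> e != set0.
Proof.
move=> /forallP/(_ e)/implyP sE /sE/cards2P[x [y [_ ->]]].
by apply/set0Pn; exists x; rewrite set21.
Qed.

Section Construction.
Variables (V : finType) (q : nat).

Definition jedge (v : V) (c : 'I_q) (j : 'I_q.-1) : {set Vp V q} :=
  [set inl (v, c); inr (v, j)].

Definition copy_matching (M : {set {set V}}) (xi : {set V} -> 'I_q) :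
    {set {set Vp V q}} :=
  [set copy_edge e (xi e) | e in M].

Lemma mem_copy_edge_inl (e : {set V}) (c : 'I_q) y d :
  (inl (y, d) \in copy_edge e c) = (y \in e) && (d == c).
Proof.
by apply/imsetP/andP=> [[x xe [-> ->]]|[ye /eqP->]]; last exists y.
Qed.

Lemma mem_copy_edge_inr (e : {set V}) (c : 'I_q) z :
  (inr z \in copy_edge e c) = false.
Proof. by apply/imsetP=> -[]. Qed.

Lemma copy_edge_inj (e e' : {set V}) (c c' : 'I_q) : e != set0 ->
  copy_edge e c = copy_edge e' c' -> e = e' /\ c = c'.
Proof.
case/set0Pn=> y ye ee'.
have := mem_copy_edge_inl e c y c; rewrite ee' mem_copy_edge_inl ye eqxx.
case/andP=> _ /eqP cc'; split=> //; apply/setP=> x; subst c'.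
by have := mem_copy_edge_inl e c x c; rewrite ee' mem_copy_edge_inl eqxx !andbT.
Qed.

Lemma mem_jedge_inl v c j w d :
  (inl (w, d) \in jedge v c j) = (w == v) && (d == c).
Proof. by rewrite !inE -!sum_eqE /= orbF xpair_eqE. Qed.

Lemma mem_jedge_inr v c j w k :
  (inr (w, k) \in jedge v c j) = (w == v) && (k == j).
Proof. by rewrite !inE -!sum_eqE /= xpair_eqE. Qed.

Lemma jedge_inj v c j w d k :
  jedge v c j = jedge w d k -> [/\ v = w, c = d & j = k].
Proof.
move=> vw; have := mem_jedge_inl v c j v c; have := mem_jedge_inr v c j v j.
by rewrite vw mem_jedge_inl mem_jedge_inr !eqxx => /andP[/eqP-> /eqP->] /andP[_ /eqP->].
Qed.

Section Edges.
Variables (E : {set {set V}}) (lam : {set V} -> {set 'I_q}).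

Variant Ep_spec (f : {set Vp V q}) : Prop :=
  | EpCopy e c of e \in E & c \in lam e & f = copy_edge e c
  | EpJ v c j of f = jedge v c j.

Lemma EpP f : f \in Ep E lam -> Ep_spec f.
Proof.
rewrite !inE => /orP[/existsP[e /andP[eE /existsP[c /andP[ce /eqP->]]]]|].
  by apply: EpCopy eE ce _.
by case/existsP=> v /existsP[c /existsP[j /eqP->]]; exact: (@EpJ _ v c j).
Qed.

Lemma jedge_Ep v c j : jedge v c j \in Ep E lam.
Proof.
rewrite !inE; apply/orP; right.
by apply/existsP; exists v; apply/existsP; exists c; apply/existsP; exists j.
Qed.

Lemma mem_copy_edge_Ep e c : e != set0 ->
  (copy_edge e c \in Ep E lam) = (e \in E) && (c \in lam e).
Proof.
move=> e0; apply/idP/andP=> [/EpP[e' c' e'E c'l /copy_edge_inj[//|-> ->]//|v d j]|].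
  by move=> ej; have := mem_copy_edge_inr e c (v, j); rewrite ej mem_jedge_inr !eqxx.
case=> eE ce; rewrite !inE; apply/orP; left; apply/existsP; exists e.
by rewrite eE; apply/existsP; exists c; rewrite ce eqxx.
Qed.

Variable gam : {set V} -> 'I_q -> rat.

Lemma gamp_copy_edge e c : simple_edges E -> e \in E -> c \in lam e ->
  gamp E lam gam (copy_edge e c) = gam e c.
Proof.
move=> sE eE ce; rewrite /gamp; case: pickP => [[e' c'] /and3P[_ _ /eqP]|/(_ (e, c))].
  by case/copy_edge_inj=> [|-> ->//]; exact: simple_edge_neq0 sE eE.
by rewrite /= eE ce eqxx.
Qed.

Lemma gamp_inr (f : {set Vp V q}) z : inr z \in f -> gamp E lam gam f = 0.
Proof.
rewrite /gamp; case: pickP=> [[e c] /and3P[_ _ /eqP->]|//].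
by rewrite mem_copy_edge_inr.
Qed.

Lemma set_weight_copy_matching (M : {set {set V}}) xi (M' : {set {set Vp V q}}) :
  simple_edges E -> M \subset E -> {in M, forall e, xi e \in lam e} ->
  copy_matching M xi \subset M' ->
  (forall f, f \in M' -> f \notin copy_matching M xi -> exists z, inr z \in f) ->
  set_weight (gamp E lam gam) M' = otr_weight gam M xi.
Proof.
move=> sE sME xiP sub rest; rewrite /set_weight /otr_weight.
rewrite (bigID (mem (copy_matching M xi))) /= [X in _ + X]big1 ?addr0; last first.
  by move=> f /andP[fM' /(rest f fM')][z]; exact: gamp_inr.
rewrite (eq_bigl (mem (copy_matching M xi))); last first.
  by move=> f; rewrite andb_idl //; apply: (subsetP sub).
rewrite big_imset /=; last first.
  move=> e1 e2 e1M _; case/copy_edge_inj=> //.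
  exact: simple_edge_neq0 sE (subsetP sME _ e1M).
by apply: eq_bigr=> e eM; rewrite gamp_copy_edge ?xiP ?(subsetP sME).
Qed.

End Edges.
End Construction.

Section MatchingToRainbow.
Variables (V : finType) (q : nat) (E : {set {set V}}).
Variables (lam : {set V} -> {set 'I_q.+1}) (M' : {set {set Vp V q.+1}}).
Hypothesis PM' : perfect_matching (Ep E lam) M'.

Let sub_Ep f : f \in M' -> f \in Ep E lam.
Proof. exact: subsetP (perfect_matching_sub PM') f. Qed.

Definition jedge_colors v := [set c | [exists j, jedge v c j \in M']].

Lemma card_jedge_colors v : #|jedge_colors v| = q.
Proof.
have partner j : exists c, jedge v c j \in M'.
  have [f fM jf] := perfect_matching_cover (inr (v, j)) PM'.
  case: (EpP (sub_Ep fM)) => [e c _ _|w c k] ?; subst f.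
    by rewrite mem_copy_edge_inr in jf.
  by move: jf fM; rewrite mem_jedge_inr => /andP[/eqP-> /eqP->]; exists c.
have [g gP] := fin_all_exists partner.
have g_inj : injective g.
  move=> j k gjk; have := perfect_matching_eq (x := inl (v, g j)) PM' (gP j) (gP k).
  by rewrite !mem_jedge_inl gjk !eqxx => /(_ isT isT)/jedge_inj[].
suff -> : jedge_colors v = g @: setT by rewrite card_imset // cardsT card_ord.
apply/setP=> c; rewrite inE; apply/existsP/imsetP=> [[j cjM]|[j _ ->]]; last first.
  by exists j.
exists j => //; have := perfect_matching_eq (x := inr (v, j)) PM' cjM (gP j).
by rewrite !mem_jedge_inr !eqxx => /(_ isT isT)/jedge_inj[].
Qed.

(* Since J(v) has q vertices, exactly one of the q + 1 copies of v is matched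
   inside its layer. *)
Lemma layer_color v : exists c0,
  (forall (e : {set V}) c, v \in e -> copy_edge e c \in M' -> c = c0) /\
  (exists2 e : {set V}, v \in e & copy_edge e c0 \in M').
Proof.
have /cards1P[c0 defc0] : #|~: jedge_colors v| == 1%N.
  apply/eqP; have := cardsC (jedge_colors v); rewrite card_jedge_colors card_ord.
  by move/(congr1 (subn^~ q)); rewrite addKn subSnn.
have jcolorsN c : (c \notin jedge_colors v) = (c == c0) by rewrite -in_setC defc0 inE.
exists c0; split.
  move=> e c ve ceM; apply/eqP; rewrite -jcolorsN inE; apply/existsP=> -[j cjM].
  have := perfect_matching_eq (x := inl (v, c)) PM' ceM cjM.
  rewrite mem_copy_edge_inl mem_jedge_inl ve !eqxx => /(_ isT isT) ej.
  by have := mem_copy_edge_inr e c (v, j); rewrite ej mem_jedge_inr !eqxx.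
have [f fM c0f] := perfect_matching_cover (inl (v, c0)) PM'.
case: (EpP (sub_Ep fM)) => [e c _ _|w c j] ?; subst f.
  by move: c0f fM; rewrite mem_copy_edge_inl => /andP[ve /eqP <-]; exists e.
move: c0f fM; rewrite mem_jedge_inl => /andP[/eqP<- /eqP<-] jM.
by have := jcolorsN c0; rewrite eqxx inE => /negP[]; apply/existsP; exists j.
Qed.

Hypothesis sE : simple_edges E.

Definition layer_color_of e := odflt ord0 [pick c | copy_edge e c \in M'].

Definition projected_matching :=
  [set e in E | copy_edge e (layer_color_of e) \in M'].

Lemma layer_color_ofE e c : e \in E -> copy_edge e c \in M' -> layer_color_of e = c.
Proof.
move=> eE ceM; rewrite /layer_color_of; case: pickP=> [d deM|/(_ c)]; last first.
  by rewrite ceM.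
have [v ve] := set0Pn _ (simple_edge_neq0 sE eE).
have [c0 [c0E _]] := layer_color v.
by rewrite /= (c0E _ _ ve deM) (c0E _ _ ve ceM).
Qed.

Lemma mem_projected_matching e c : copy_edge e c \in M' -> e != set0 ->
  e \in projected_matching /\ layer_color_of e = c.
Proof.
move=> ceM e0; have /andP[eE _] : (e \in E) && (c \in lam e).
  by rewrite -(mem_copy_edge_Ep _ _ _ e0) sub_Ep.
by rewrite inE eE (layer_color_ofE eE ceM) ceM.
Qed.

Lemma layer_color_of_lam e : e \in projected_matching -> layer_color_of e \in lam e.
Proof.
rewrite inE => /andP[eE /sub_Ep]; rewrite mem_copy_edge_Ep ?(simple_edge_neq0 sE) //.
by case/andP.
Qed.

Lemma projected_matching_perfect : perfect_matching E projected_matching.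
Proof.
apply: perfect_matchingI=> [|v|v e1 e2].
- by apply/subsetP=> e; rewrite inE => /andP[].
- have [c0 [_ [e ve ceM]]] := layer_color v.
  by exists e; [case: (mem_projected_matching ceM) => //; apply/set0Pn; exists v|].
rewrite !inE => /andP[e1E c1M] /andP[e2E c2M] ve1 ve2.
have [c0 [c0E _]] := layer_color v.
have c1 := c0E _ _ ve1 c1M; have c2 := c0E _ _ ve2 c2M.
rewrite c1 in c1M; rewrite c2 in c2M.
have e10 : e1 != set0 by apply/set0Pn; exists v.
have := perfect_matching_eq (x := inl (v, c0)) PM' c1M c2M.
by rewrite !mem_copy_edge_inl ve1 ve2 eqxx => /(_ isT isT)/(copy_edge_inj e10)[].
Qed.

Lemma projected_matching_rainbow :
  [forall ij in Hp q.+1, [exists f in M', exists u, exists v,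
     [&& u \in f, v \in f, u != v, partp u == ij.1 & partp v == ij.2]]] ->
  over_the_rainbow E lam projected_matching layer_color_of.
Proof.
move=> HM'; split; first exact: projected_matching_perfect.
split=> [|c]; first exact: layer_color_of_lam.
have /(forall_inP HM')/exists_inP[f fM] : (Some c, Some c) \in Hp q.+1.
  exact: imset_f.
case/existsP=> u /existsP[w /and5P[uf wf uw /eqP pu /eqP pw]].
case: (EpP (sub_Ep fM)) => [e d _ _|v d j] ?; subst f.
  case: u uf uw pu => [[y d']|//].
  rewrite mem_copy_edge_inl => /andP[ye /eqP-> _ [<-]].
  have e0 : e != set0 by apply/set0Pn; exists y.
  by have [eM <-] := mem_projected_matching fM e0; exists e.
move: u w uf wf uw pu pw => [[y d1]|//] [[z d2]|//]; rewrite !mem_jedge_inl.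
by case/andP=> /eqP-> /eqP-> /andP[/eqP-> /eqP->]; rewrite eqxx.
Qed.

Lemma projected_matching_weight (gam : {set V} -> 'I_q.+1 -> rat) :
  otr_weight gam projected_matching layer_color_of =
  set_weight (gamp E lam gam) M'.
Proof.
symmetry; apply: set_weight_copy_matching=> //.
- by apply/subsetP=> e; rewrite inE => /andP[].
- exact: layer_color_of_lam.
- by apply/subsetP=> _ /imsetP[e eM ->]; move: eM; rewrite inE => /andP[].
move=> f fM; case: (EpP (sub_Ep fM)) => [e c eE _|v c j] ?; subst f; last first.
  by exists (v, j); rewrite mem_jedge_inr !eqxx.
case: (mem_projected_matching fM (simple_edge_neq0 sE eE)) => eM <-.
by move/negP; case; apply: imset_f.
Qed.

End MatchingToRainbow.

Section RainbowToMatching.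
Variables (V : finType) (q : nat) (E : {set {set V}}).
Variable lam : {set V} -> {set 'I_q.+1}.
Variables (M : {set {set V}}) (xi : {set V} -> 'I_q.+1) (cv : V -> 'I_q.+1).
Hypotheses (sE : simple_edges E) (PM : perfect_matching E M).
Hypothesis xi_lam : {in M, forall e, xi e \in lam e}.
Hypothesis cvE : forall v e, e \in M -> v \in e -> cv v = xi e.

(* [lift (cv v)] enumerates the colours other than [cv v], so J(v) is matched
   to exactly the copies of v that the layer edges leave free. *)
Definition lifted_matching : {set {set Vp V q.+1}} :=
  copy_matching M xi :|: [set jedge v (lift (cv v) j) j | v : V, j : 'I_q].

Variant lifted_matching_spec (f : {set Vp V q.+1}) : Prop :=
  | LiftedCopy e of e \in M & f = copy_edge e (xi e)
  | LiftedJ v j of f = jedge v (lift (cv v) j) j.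

Lemma lifted_matchingP f : f \in lifted_matching -> lifted_matching_spec f.
Proof.
rewrite inE => /orP[/imsetP[e eM ->]|/imset2P[v j _ _ ->]].
  exact: LiftedCopy eM _.
exact: (@LiftedJ _ v j).
Qed.

Lemma copy_edge_lifted e : e \in M -> copy_edge e (xi e) \in lifted_matching.
Proof. by move=> eM; rewrite inE; apply/orP; left; apply: imset_f. Qed.

Lemma jedge_lifted v j : jedge v (lift (cv v) j) j \in lifted_matching.
Proof. by rewrite inE; apply/orP; right; apply: imset2_f. Qed.

Let sub_E e : e \in M -> e \in E.
Proof. exact: subsetP (perfect_matching_sub PM) e. Qed.

Lemma copy_jedge_disjoint e v j x : e \in M ->
  x \in copy_edge e (xi e) -> x \in jedge v (lift (cv v) j) j -> False.
Proof.
case: x => [[y d]|z] eM; last by rewrite mem_copy_edge_inr.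
rewrite mem_copy_edge_inl mem_jedge_inl => /andP[ye /eqP->] /andP[/eqP yv /eqP].
by rewrite -(cvE eM ye) yv => /eqP; rewrite (negbTE (neq_lift _ _)).
Qed.

Lemma lifted_matching_perfect : perfect_matching (Ep E lam) lifted_matching.
Proof.
apply: perfect_matchingI=> [|[[v c]|[v j]]|x f1 f2].
- apply/subsetP=> f /lifted_matchingP[e eM ->|v j ->]; last exact: jedge_Ep.
  by rewrite mem_copy_edge_Ep ?(simple_edge_neq0 sE) ?sub_E // xi_lam.
- have [<-|cvc] := eqVneq (cv v) c.
    have [e eM ve] := perfect_matching_cover v PM.
    exists (copy_edge e (xi e)); first exact: copy_edge_lifted.
    by rewrite mem_copy_edge_inl ve (cvE eM ve) eqxx.
  have [j -> _] := unlift_some cvc.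
  by exists (jedge v (lift (cv v) j) j); rewrite ?jedge_lifted ?mem_jedge_inl ?eqxx.
- by exists (jedge v (lift (cv v) j) j); rewrite ?jedge_lifted ?mem_jedge_inr ?eqxx.
move=> /lifted_matchingP[e1 e1M ->|v1 j1 ->] /lifted_matchingP[e2 e2M ->|v2 j2 ->].
- case: x => [[y d]|z]; last by rewrite mem_copy_edge_inr.
  rewrite !mem_copy_edge_inl => /andP[ye1 _] /andP[ye2 _].
  by rewrite (perfect_matching_eq PM e1M e2M ye1 ye2).
- by move=> x1 x2; case: (copy_jedge_disjoint e1M x1 x2).
- by move=> x1 x2; case: (copy_jedge_disjoint e2M x2 x1).
case: x => [[y d]|[y k]]; rewrite ?mem_jedge_inl ?mem_jedge_inr.
  by case/andP=> /eqP<- /eqP-> /andP[/eqP<- /eqP/lift_inj->].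
by case/andP=> /eqP<- /eqP-> /andP[/eqP<- /eqP->].
Qed.

Lemma lifted_matching_conjoining : (forall c, exists2 e, e \in M & xi e = c) ->
  conjoining (Ep E lam) lifted_matching (@partp V q.+1) (Hp q.+1).
Proof.
move=> xi_onto; rewrite /conjoining lifted_matching_perfect.
apply/forall_inP=> _ /imsetP[c _ ->]; have [e eM <-] := xi_onto c.
have /cards2P[u [w [uw defe]]] : #|e| == 2%N by exact: (forall_inP sE _ (sub_E eM)).
apply/exists_inP; exists (copy_edge e (xi e)); first exact: copy_edge_lifted.
apply/existsP; exists (inl (u, xi e)); apply/existsP; exists (inl (w, xi e)).
rewrite !mem_copy_edge_inl defe !inE !eqxx orbT /= andbT.
by apply: contra uw => /eqP[->].
Qed.

Lemma lifted_matching_weight (gam : {set V} -> 'I_q.+1 -> rat) :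
  set_weight (gamp E lam gam) lifted_matching = otr_weight gam M xi.
Proof.
apply: set_weight_copy_matching=> //; first exact: perfect_matching_sub PM.
  exact: subsetUl.
move=> f /lifted_matchingP[e eM ->|v j -> _].
  by move/negP; case; apply: imset_f.
by exists (v, j); rewrite mem_jedge_inr !eqxx.
Qed.

End RainbowToMatching.

Theorem lemma9 (V : finType) (q : nat) (E : {set {set V}})
    (lam : {set V} -> {set 'I_q}) (gam : {set V} -> 'I_q -> rat) :
  (0 < q)%N ->
  simple_edges E ->
  (forall e, e \in E -> lam e != set0) ->
  (forall e c, e \in E -> c \in lam e -> 0 <= gam e c) ->
  forall l : rat,
    (exists M xi, over_the_rainbow E lam M xi /\ otr_weight gam M xi = l) <->
    (exists M' : {set {set Vp V q}},
        conjoining (Ep E lam) M' (@partp V q) (Hp q) /\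
        set_weight (gamp E lam gam) M' = l).
Proof.
case: q lam gam => [//|q] lam gam _ sE _ _ l; split.
  case=> M [xi [[PM [xi_lam xi_onto]] <-]].
  have [cv cvE] := perfect_matching_vertex_fun xi PM.
  exists (lifted_matching M xi cv).
  split; [exact: lifted_matching_conjoining | exact: lifted_matching_weight].
case=> M' [/andP[PM' HM'] <-].
exists (projected_matching E M'), (layer_color_of M').
split; [exact: projected_matching_rainbow | exact: projected_matching_weight].
Qed.
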